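(* Let $A$ be a pca and $f,g:A\rightharpoonup A$ partial functions. Then the pcas $A[f][g]$ and $A[g][f]$ are isomorphic.
   Context: A partial combinatory algebra (pca) is a set $A$ with a partial binary application (associating to the left) admitting $K,S\in A$ with $Kab=a$, $Sab{\downarrow}$, $Sabc\simeq ac(bc)$. Each pca has fixed Booleans $\top,\bot$, pairing $p$ with projections $p_0,p_1$ ($p_0(pab)=a$, $p_1(pab)=b$), and a coding $[u_0,\dots,u_{n-1}]$ of finite sequences with concatenation $\ast$. For a pca $A$ and partial $f:A\rightharpoonup A$, the pca $A[f]$ has underlying set $A$; for $a,b\in A$, an $f$-dialogue between $a$ and $b$ is a code $u=[u_0,\dots,u_{n-1}]$ such that for every $i<n$ there is $v_i$ with $a\cdot([b]\ast[u_0,\dots,u_{i-1}])=p\bot v_i$ and $f(v_i)$ defined and equal to $u_i$; then $a\cdot^f b=c$ iff there is an $f$-dialogue $u$ between $a$ and $b$ with $a\cdot([b]\ast u)=p\top c$. Since $A[f]$ has underlying set $A$, $g$ is also a partial endofunction of $A[f]$, so $A[f][g]$ makes sense. An applicative morphism $\gamma:A\to B$ is a function from $A$ to nonempty subsets of $B$ with some $r\in B$ such that $aa'{\downarrow}$, $b\in\gamma(a)$, $b'\in\gamma(a')$ imply $rbb'{\downarrow}$ and $rbb'\in\gamma(aa')$; composition is $(\delta\gamma)(a)=\bigcup_{b\in\gamma(a)}\delta(b)$, identities are $a\mapsto\{a\}$. Pcas $A,B$ are isomorphic if there are applicative morphisms $\gamma:A\to B$, $\delta:B\to A$ with $\delta\gamma$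 and $\gamma\delta$ equal to the identity morphisms. *)

From Stdlib Require Import List.
Import ListNotations.

(* Partial application is represented as a relation [ap a b c] : "a·b ↓ and a·b = c";
   partial functions f : A ⇀ A are represented as [A -> option A]. *)
Definition appl (A : Type) := A -> A -> A -> Prop.

Definition functional_ap {A} (ap : appl A) : Prop :=
  forall a b c c', ap a b c -> ap a b c' -> c = c'.

Record pca_str (A : Type) := PcaStr {
  ap : appl A;
  pK : A; pS : A;
  pT : A; pF : A;
  pp : A; pp0 : A; pp1 : A;
  ap_functional : functional_ap ap;
  K_ax : forall a b, exists k, ap pK a k /\ ap k b a;
  S_def : forall a b, exists s1 s, ap pS a s1 /\ ap s1 b s;
  S_ax : forall a b s1 s c d, ap pS a s1 -> ap s1 b s ->
           (ap s c d <-> exists x y, ap a c x /\ ap b c y /\ ap x y d);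
  T_ax : forall a b, exists t, ap pT a t /\ ap t b a;
  F_ax : forall a b, exists t, ap pF a t /\ ap t b b;
  p_def : forall a b, exists q r, ap pp a q /\ ap q b r;
  p0_ax : forall a b q r, ap pp a q -> ap q b r -> ap pp0 r a;
  p1_ax : forall a b q r, ap pp a q -> ap q b r -> ap pp1 r b
}.
Arguments ap {A}. Arguments pK {A}. Arguments pS {A}. Arguments pT {A}.
Arguments pF {A}. Arguments pp {A}. Arguments pp0 {A}. Arguments pp1 {A}.

Definition pairv {A} (P : pca_str A) (a b z : A) : Prop :=
  exists q, ap P (pp P) a q /\ ap P q b z.

(* Coding of finite sequences in P:
   [] := p ⊤ ⊤,   [u_0,...,u_{n-1}] := p ⊥ (p u_0 [u_1,...,u_{n-1}]).
   [is_code P us z] : z = [us]. Concatenation of codes is concatenation of lists. *)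
Inductive is_code {A} (P : pca_str A) : list A -> A -> Prop :=
| code_nil : forall z, pairv P (pT P) (pT P) z -> is_code P [] z
| code_cons : forall u us z w y,
    is_code P us z -> pairv P u z w -> pairv P (pF P) w y -> is_code P (u :: us) y.

(* f-dialogue between a and b: the code u = [us] with us = [u_0,...,u_{n-1}] such that
   for each i < n there is v_i with a·([b] * [u_0,...,u_{i-1}]) = p ⊥ v_i and f(v_i) = u_i. *)
Definition dialogue {A} (P : pca_str A) (f : A -> option A) (a b : A) (us : list A) : Prop :=
  forall i, i < length us ->
    exists v x w, is_code P (b :: firstn i us) x /\ pairv P (pF P) v w /\
                  ap P a x w /\ f v = Some (nth i us b).

(* Application of A[f]: a ·^f b = c iff there is an f-dialogue u between a and b
   with a·([b] * u) = p ⊤ c. *)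
Definition rel_ap {A} (P : pca_str A) (f : A -> option A) : appl A :=
  fun a b c => exists us, dialogue P f a b us /\
    exists x w, is_code P (b :: us) x /\ pairv P (pT P) c w /\ ap P a x w.

(* Applicative morphisms; [gam a b] means b ∈ γ(a). *)
Definition applicative {A B} (apA : appl A) (apB : appl B) (gam : A -> B -> Prop) : Prop :=
  (forall a, exists b, gam a b) /\
  exists r, forall a a' c b b', apA a a' c -> gam a b -> gam a' b' ->
    exists rb rbb', apB r b rb /\ apB rb b' rbb' /\ gam c rbb'.

Definition comp_is_id {A B} (gam : A -> B -> Prop) (del : B -> A -> Prop) : Prop :=
  forall a x, (exists b, gam a b /\ del b x) <-> x = a.

Definition pca_iso {A B} (apA : appl A) (apB : appl B) : Prop :=
  exists (gam : A -> B -> Prop) (del : B -> A -> Prop),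
    applicative apA apB gam /\ applicative apB apA del /\
    comp_is_id gam del /\ comp_is_id del gam.

(* A[f][g] and A[g][f] have the same carrier, and we show that the identity is an
   applicative morphism in each direction; by symmetry one direction suffices.
   Inside Q = A[g] consider f-computations: elements that read the f-answers from a coded
   input and either ask a query or return a result.  They form a monad (return, bind, ask).
   The application of A is computable this way (A embeds into A[g]), and if the
   application of a pca B and a partial function h are computable, so is the application
   of B[h]: a recursive loop replays the h-dialogue, answering each query by computing h.
   Applying this to B = A with h = f, then to B = A[f] with h = g (which A[g] computes
   directly), makes the application of A[f][g] an f-computation in A[g]; an element running
   that computation against its input realizes it in A[g][f]. *)

From Stdlib Require Import List Arith Lia.
Import ListNotations.

Section PairsAndCodes.
Context {A : Type} (Q : pca_str A).

Lemma ap_fun a b c c' : ap Q a b c -> ap Q a b c' -> c = c'.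
Proof. apply ap_functional. Qed.

Lemma pairv_total a b : exists z, pairv Q a b z.
Proof. destruct (p_def _ Q a b) as [q [z [Hq Hz]]]. now exists z, q. Qed.

Lemma pairv_fun a b z z' : pairv Q a b z -> pairv Q a b z' -> z = z'.
Proof.
  intros [q [Hq Hz]] [q' [Hq' Hz']].
  rewrite (ap_fun _ _ _ _ Hq Hq') in Hz. exact (ap_fun _ _ _ _ Hz Hz').
Qed.

Lemma pairv_p0 a b z : pairv Q a b z -> ap Q (pp0 Q) z a.
Proof. intros [q [Hq Hz]]. exact (p0_ax _ Q _ _ _ _ Hq Hz). Qed.

Lemma pairv_p1 a b z : pairv Q a b z -> ap Q (pp1 Q) z b.
Proof. intros [q [Hq Hz]]. exact (p1_ax _ Q _ _ _ _ Hq Hz). Qed.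

Lemma is_code_total L : exists z, is_code Q L z.
Proof.
  induction L as [|u L [z Hz]].
  - destruct (pairv_total (pT Q) (pT Q)) as [z Hz]. exists z. now constructor.
  - destruct (pairv_total u z) as [w Hw]. destruct (pairv_total (pF Q) w) as [y Hy].
    exists y. econstructor; eauto.
Qed.

Lemma is_code_fun L z z' : is_code Q L z -> is_code Q L z' -> z = z'.
Proof.
  intros H. revert z'. induction H as [z Hz|u us z w y Hus IH Hw Hy]; intros z' H';
    inversion H' as [? Hz'|? ? ? w' ? Hus' Hw' Hy']; subst.
  - exact (pairv_fun _ _ _ _ Hz Hz').
  - rewrite <- (IH _ Hus') in Hw'. rewrite (pairv_fun _ _ _ _ Hw Hw') in Hy.
    exact (pairv_fun _ _ _ _ Hy Hy').
Qed.

Lemma is_code_cons_inv u L y : is_code Q (u :: L) y ->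
  exists z w, is_code Q L z /\ pairv Q u z w /\ pairv Q (pF Q) w y.
Proof. intros H. inversion H; subst. eauto. Qed.

End PairsAndCodes.

Inductive tm (A : Type) := V (n : nat) | C (a : A) | Ap (t u : tm A).
Arguments V {A}. Arguments C {A}. Arguments Ap {A}.

Definition upd {A} (r : nat -> A) (x : nat) (a : A) : nat -> A :=
  fun y => if Nat.eqb y x then a else r y.

Fixpoint occ {A} (x : nat) (t : tm A) : bool :=
  match t with V y => Nat.eqb y x | C _ => false | Ap t u => occ x t || occ x u end.

Fixpoint maxvar {A} (t : tm A) : nat :=
  match t with V y => y | C _ => 0 | Ap t u => Nat.max (maxvar t) (maxvar u) end.

Lemma occ_gt_maxvar {A} (t : tm A) x : maxvar t < x -> occ x t = false.
Proof.
  induction t as [y| |t IHt u IHu]; cbn; intros Hx; auto.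
  - apply Nat.eqb_neq. lia.
  - rewrite IHt, IHu by lia. reflexivity.
Qed.

Section CombinatoryCompleteness.
Context {A : Type} (Q : pca_str A).

Inductive eval (r : nat -> A) : tm A -> A -> Prop :=
| eval_V n : eval r (V n) (r n)
| eval_C a : eval r (C a) a
| eval_Ap t u x y c : eval r t x -> eval r u y -> ap Q x y c -> eval r (Ap t u) c.

Lemma eval_var r n c : r n = c -> eval r (V n) c.
Proof. intros <-. constructor. Qed.

Ltac lookup := lookup.

Lemma eval_var_inv r n c : eval r (V n) c -> c = r n.
Proof. now inversion 1. Qed.

Lemma eval_Ap_inv r t u c : eval r (Ap t u) c -> exists x y, eval r t x /\ eval r u y /\ ap Q x y c.
Proof. inversion 1; subst. eauto. Qed.

Lemma eval_ext r r' t c : (forall n, occ n t = true -> r n = r' n) -> eval r t c -> eval r' t c.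
Proof.
  intros Hr H. induction H as [n|a|t u x y c Ht IHt Hu IHu Hc].
  - apply eval_var. symmetry. apply Hr. apply Nat.eqb_refl.
  - constructor.
  - cbn in Hr. econstructor; [apply IHt | apply IHu | exact Hc]; intros n Hn; apply Hr;
      rewrite Hn; auto using Bool.orb_true_r.
Qed.

Lemma eval_upd_notin r x a t c : occ x t = false -> eval r t c -> eval (upd r x a) t c.
Proof.
  intros Ho. apply eval_ext. intros n Hn. unfold upd.
  destruct (Nat.eqb_spec n x) as [->|]; congruence.
Qed.

Lemma K_spec b : exists k, ap Q (pK Q) b k /\ forall a c, ap Q k a c <-> c = b.
Proof.
  destruct (K_ax _ Q b b) as [k [Hk _]]. exists k. split; [exact Hk|].
  intros a c. destruct (K_ax _ Q b a) as [k' [Hk' Hb]].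
  rewrite <- (ap_fun _ _ _ _ _ Hk Hk') in Hb.
  split; [intros Hc; exact (ap_fun _ _ _ _ _ Hc Hb) | intros ->; exact Hb].
Qed.

Definition tI : tm A := Ap (Ap (C (pS Q)) (C (pK Q))) (C (pK Q)).

Lemma tI_spec r : exists i, eval r tI i /\ forall a c, ap Q i a c <-> c = a.
Proof.
  destruct (S_def _ Q (pK Q) (pK Q)) as [s1 [i [Hs1 Hi]]]. exists i. split.
  - repeat econstructor; eassumption.
  - intros a c. rewrite (S_ax _ Q _ _ _ _ a c Hs1 Hi).
    destruct (K_spec a) as [k [Hk Hk']]. split.
    + intros [x [y [Hx [_ Hc]]]]. rewrite (ap_fun _ _ _ _ _ Hx Hk) in Hc.
      exact (proj1 (Hk' _ _) Hc).
    + intros ->. destruct (K_ax _ Q a k) as [k2 [Hk2 _]]. exists k, k2.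
      repeat split; auto. now apply Hk'.
Qed.

Lemma const_spec r t b : eval r t b ->
  exists k, eval r (Ap (C (pK Q)) t) k /\ forall a c, ap Q k a c <-> c = b.
Proof.
  intros Ht. destruct (K_spec b) as [k [Hk Hk']]. exists k. split; [|exact Hk'].
  econstructor; [constructor | exact Ht | exact Hk].
Qed.

Fixpoint lam (x : nat) (t : tm A) : tm A :=
  match t with
  | V y => if Nat.eqb y x then tI else Ap (C (pK Q)) (V y)
  | C a => Ap (C (pK Q)) (C a)
  | Ap t u => Ap (Ap (C (pS Q)) (lam x t)) (lam x u)
  end.

Lemma eval_lam r x t : exists v, eval r (lam x t) v /\
  forall a c, ap Q v a c <-> eval (upd r x a) t c.
Proof.
  induction t as [y|b|t [v1 [Hv1 Hv1']] u [v2 [Hv2 Hv2']]]; cbn.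
  - destruct (Nat.eqb_spec y x) as [->|Hyx].
    + destruct (tI_spec r) as [i [Hi Hi']]. exists i. split; [exact Hi|].
      intros a c. rewrite Hi'. split; [intros ->|intros Hc%eval_var_inv];
        [apply eval_var|]; unfold upd in *; now rewrite Nat.eqb_refl in *.
    + destruct (const_spec r (V y) (r y) (eval_V _ _)) as [k [Hk Hk']].
      exists k. split; [exact Hk|].
      intros a c. rewrite Hk'. split; [intros ->|intros Hc%eval_var_inv];
        [apply eval_var|]; unfold upd in *; apply Nat.eqb_neq in Hyx; now rewrite Hyx in *.
  - destruct (const_spec r (C b) b (eval_C _ _)) as [k [Hk Hk']]. exists k. split; [exact Hk|].
    intros a c. rewrite Hk'. split; [intros ->; constructor | now inversion 1].
  - destruct (S_def _ Q v1 v2) as [s1 [s [Hs1 Hs]]]. exists s. split.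
    + econstructor; [econstructor; [constructor | exact Hv1 | exact Hs1] | exact Hv2 | exact Hs].
    + intros a c. rewrite (S_ax _ Q _ _ _ _ a c Hs1 Hs). split.
      * intros [x1 [y1 [Hx [Hy Hc]]]]. econstructor; [apply Hv1' | apply Hv2' | ]; eauto.
      * intros (x1 & y1 & Hx & Hy & Hc)%eval_Ap_inv. exists x1, y1.
        rewrite Hv1', Hv2'. auto.
Qed.

End CombinatoryCompleteness.

Ltac lookup := apply eval_var; reflexivity.

Section Abstraction.
Context {A : Type} (Q : pca_str A).

Definition env (l : list A) (n : nat) : A := nth n l (pK Q).

Lemma upd_env l a n : upd (env l) (length l) a n = env (l ++ [a]) n.
Proof.
  unfold upd, env. destruct (Nat.eqb_spec n (length l)) as [->|Hn].
  - now rewrite app_nth2, Nat.sub_diag by lia.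
  - destruct (Nat.lt_ge_cases n (length l)).
    + now rewrite app_nth1.
    + rewrite !nth_overflow; try reflexivity; rewrite ?length_app; cbn; lia.
Qed.

Fixpoint abstracts (n : nat) (F : A) (l : list A) (body : tm A) : Prop :=
  match n with
  | 0 => forall a c, ap Q F a c <-> eval Q (env (l ++ [a])) body c
  | S n => forall a, exists w, ap Q F a w /\ abstracts n w (l ++ [a]) body
  end.

Fixpoint lams (x n : nat) (t : tm A) : tm A :=
  match n with 0 => lam Q x t | S n => lam Q x (lams (S x) n t) end.

Lemma eval_lams n l body :
  exists F, eval Q (env l) (lams (length l) n body) F /\ abstracts n F l body.
Proof.
  revert l. induction n as [|n IH]; intros l; cbn.
  - destruct (eval_lam Q (env l) (length l) body) as [v [Hv Hv']]. exists v. split; [exact Hv|].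
    intros a c. rewrite Hv'. split; apply eval_ext; intros k _; [|symmetry]; apply upd_env.
  - destruct (eval_lam Q (env l) (length l) (lams (S (length l)) n body)) as [v [Hv Hv']].
    exists v. split; [exact Hv|]. intros a.
    destruct (IH (l ++ [a])) as [w [Hw Hw']]. exists w. split; [|exact Hw'].
    apply Hv'. rewrite length_app, Nat.add_1_r in Hw.
    revert Hw. apply eval_ext. intros k _. symmetry. apply upd_env.
Qed.

Lemma abstraction_exists n body : exists F, abstracts n F [] body.
Proof. destruct (eval_lams n [] body) as [F [_ HF]]. eauto. Qed.

(* Turing's combinator [th = W W] with [W x h a = h (x x h) a]. *)
Lemma turing_fixpoint : exists th, forall h, exists v, ap Q th h v /\
  forall a c, ap Q v a c <-> exists w, ap Q h v w /\ ap Q w a c.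
Proof.
  destruct (abstraction_exists 2 (Ap (Ap (V 1) (Ap (Ap (V 0) (V 0)) (V 1))) (V 2))) as [W HW].
  destruct (HW W) as [th [Hth HthW]]. exists th. intros h.
  destruct (HthW h) as [v [Hv Hv']]. exists v. split; [exact Hv|].
  intros a c. rewrite Hv'. cbn. split.
  - intros (x & y & Hx & Hy & Hc)%eval_Ap_inv.
    apply eval_var_inv in Hy. subst y.
    apply eval_Ap_inv in Hx as (h' & z & Hh & Hz & Hx). apply eval_var_inv in Hh. subst h'.
    apply eval_Ap_inv in Hz as (t & h' & Ht & Hh & Hz). apply eval_var_inv in Hh. subst h'.
    apply eval_Ap_inv in Ht as (w1 & w2 & H1 & H2 & Ht).
    apply eval_var_inv in H1, H2. subst w1 w2. cbn in *.
    rewrite (ap_fun _ _ _ _ _ Ht Hth) in Hz. rewrite (ap_fun _ _ _ _ _ Hz Hv) in Hx. eauto.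
  - intros [w [Hw Hwa]].
    eapply eval_Ap; [eapply eval_Ap; [lookup | | exact Hw]
                    | lookup | exact Hwa].
    eapply eval_Ap; [eapply eval_Ap; [lookup | lookup | exact Hth]
                    | lookup | exact Hv].
Qed.

Lemma fixpoint_exists body : exists F, abstracts 1 F [F] body.
Proof.
  destruct turing_fixpoint as [th Hth]. destruct (abstraction_exists 2 body) as [H HH].
  destruct (Hth H) as [F [_ HF]]. exists F. intros a.
  destruct (HH F) as [w1 [Hw1 Hw1']]. destruct (Hw1' a) as [w2 [Hw2 Hw2']].
  exists w2. split; [apply HF; eauto | exact Hw2'].
Qed.

End Abstraction.

Section DerivedForms.
Context {A : Type} (Q : pca_str A).

Definition pairT (t u : tm A) : tm A := Ap (Ap (C (pp Q)) t) u.
Definition p0T (t : tm A) : tm A := Ap (C (pp0 Q)) t.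
Definition p1T (t : tm A) : tm A := Ap (C (pp1 Q)) t.
Definition hdT (t : tm A) : tm A := p0T (p1T t).
Definition tlT (t : tm A) : tm A := p1T (p1T t).
(* The branches are abstracted over a fresh variable, so only the selected one is evaluated. *)
Definition thunk (t : tm A) : tm A := lam Q (S (maxvar t)) t.
Definition tif (b t1 t2 : tm A) : tm A := Ap (Ap (Ap b (thunk t1)) (thunk t2)) (C (pK Q)).
Definition tlet (x : nat) (t body : tm A) : tm A := Ap (lam Q x body) t.

Lemma eval_pair r t u a b w :
  eval Q r t a -> eval Q r u b -> pairv Q a b w -> eval Q r (pairT t u) w.
Proof.
  intros Ht Hu [q [Hq Hw]].
  econstructor; [econstructor; [constructor | exact Ht | exact Hq] | exact Hu | exact Hw].
Qed.

Lemma eval_p0 r t z a b : eval Q r t z -> pairv Q a b z -> eval Q r (p0T t) a.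
Proof. intros Ht Hz. econstructor; [constructor | exact Ht | exact (pairv_p0 Q _ _ _ Hz)]. Qed.

Lemma eval_p1 r t z a b : eval Q r t z -> pairv Q a b z -> eval Q r (p1T t) b.
Proof. intros Ht Hz. econstructor; [constructor | exact Ht | exact (pairv_p1 Q _ _ _ Hz)]. Qed.

Lemma eval_hd r t z b w x y : eval Q r t z -> pairv Q x y w -> pairv Q b w z -> eval Q r (hdT t) x.
Proof. intros Ht Hw Hz. exact (eval_p0 _ _ _ _ _ (eval_p1 _ _ _ _ _ Ht Hz) Hw). Qed.

Lemma eval_tl r t z b w x y : eval Q r t z -> pairv Q x y w -> pairv Q b w z -> eval Q r (tlT t) y.
Proof. intros Ht Hw Hz. exact (eval_p1 _ _ _ _ _ (eval_p1 _ _ _ _ _ Ht Hz) Hw). Qed.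

Lemma eval_code_hd r t z u s : eval Q r t z -> is_code Q (u :: s) z -> eval Q r (hdT t) u.
Proof. intros Ht (z' & w & _ & Hw & Hz)%is_code_cons_inv. eapply eval_hd; eassumption. Qed.

Lemma eval_code_tl r t z u s : eval Q r t z -> is_code Q (u :: s) z ->
  exists z', is_code Q s z' /\ eval Q r (tlT t) z'.
Proof.
  intros Ht (z' & w & Hs & Hw & Hz)%is_code_cons_inv.
  exists z'. split; [exact Hs | eapply eval_tl; eassumption].
Qed.

Lemma eval_isnil r t z : eval Q r t z -> is_code Q [] z -> eval Q r (p0T t) (pT Q).
Proof. intros Ht Hz. inversion Hz; subst. eapply eval_p0; eassumption. Qed.

Lemma eval_iscons r t z u s : eval Q r t z -> is_code Q (u :: s) z -> eval Q r (p0T t) (pF Q).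
Proof. intros Ht (z' & w & _ & _ & Hz)%is_code_cons_inv. eapply eval_p0; eassumption. Qed.

Lemma eval_lam_ap r x body a c : eval Q (upd r x a) body c ->
  exists v, eval Q r (lam Q x body) v /\ ap Q v a c.
Proof. intros Hb. destruct (eval_lam Q r x body) as [v [Hv Hv']]. exists v. now rewrite Hv'. Qed.

Lemma eval_lam_env l body a c : eval Q (env Q (l ++ [a])) body c ->
  exists v, eval Q (env Q l) (lam Q (length l) body) v /\ ap Q v a c.
Proof.
  intros Hb. apply eval_lam_ap. revert Hb. apply eval_ext. intros n _. symmetry. apply upd_env.
Qed.

Lemma eval_let l t body a c : eval Q (env Q l) t a -> eval Q (env Q (l ++ [a])) body c ->
  eval Q (env Q l) (tlet (length l) t body) c.
Proof.
  intros Ht Hb. destruct (eval_lam_env _ _ _ _ Hb) as [v [Hv Hva]].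
  econstructor; [exact Hv | exact Ht | exact Hva].
Qed.

Lemma eval_thunk r t a c : eval Q r t c -> exists v, eval Q r (thunk t) v /\ ap Q v a c.
Proof.
  intros Ht. apply eval_lam_ap, eval_upd_notin; [|exact Ht].
  apply occ_gt_maxvar. lia.
Qed.

Lemma eval_if_true r b t1 t2 c : eval Q r b (pT Q) -> eval Q r t1 c -> eval Q r (tif b t1 t2) c.
Proof.
  intros Hb H1. destruct (eval_thunk _ _ (pK Q) _ H1) as [v1 [Hv1 Hv1c]].
  destruct (eval_lam Q r (S (maxvar t2)) t2) as [v2 [Hv2 _]].
  destruct (T_ax _ Q v1 v2) as [t [Ht1 Ht2]].
  econstructor;
    [econstructor; [econstructor; [exact Hb | exact Hv1 | exact Ht1] | exact Hv2 | exact Ht2]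
                | constructor | exact Hv1c].
Qed.

Lemma eval_if_false r b t1 t2 c : eval Q r b (pF Q) -> eval Q r t2 c -> eval Q r (tif b t1 t2) c.
Proof.
  intros Hb H2. destruct (eval_thunk _ _ (pK Q) _ H2) as [v2 [Hv2 Hv2c]].
  destruct (eval_lam Q r (S (maxvar t1)) t1) as [v1 [Hv1 _]].
  destruct (F_ax _ Q v1 v2) as [t [Ht1 Ht2]].
  econstructor;
    [econstructor; [econstructor; [exact Hb | exact Hv1 | exact Ht1] | exact Hv2 | exact Ht2]
                | constructor | exact Hv2c].
Qed.

End DerivedForms.

Section OracleComputations.
Context {A : Type} (Q : pca_str A) (f : A -> option A).

Definition ap2 (F a b c : A) : Prop := exists w, ap Q F a w /\ ap Q w b c.

(* An f-computation [m] reads the f-answers from a code given as input: applied to the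
   code of the answers read so far it either asks [p ⊥ v] for the value [f v], or, once
   all of [L] has been read, returns [p ⊤ (p c z')] with [z'] the code of the unread rest. *)
Definition runs (m : A) (L : list A) (c : A) : Prop :=
  (forall s z, is_code Q (L ++ s) z -> exists z' p y,
      is_code Q s z' /\ pairv Q c z' p /\ pairv Q (pT Q) p y /\ ap Q m z y) /\
  (forall i u, nth_error L i = Some u -> exists v z y,
      is_code Q (firstn i L) z /\ pairv Q (pF Q) v y /\ ap Q m z y /\ f v = Some u).

Definition yields (m c : A) : Prop := exists L, runs m L c.

Lemma ret_exists : exists RET, forall c, exists m, ap Q RET c m /\ runs m [] c.
Proof.
  destruct (abstraction_exists Q 1 (pairT Q (C (pT Q)) (pairT Q (V 0) (V 1)))) as [RET HRET].
  exists RET. intros c. destruct (HRET c) as [m [Hm Hm']]. exists m. split; [exact Hm|]. split.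
  - intros s z Hz. destruct (pairv_total Q c z) as [p Hp].
    destruct (pairv_total Q (pT Q) p) as [y Hy]. exists z, p, y. repeat split; auto.
    apply Hm'. eapply eval_pair; [constructor | | exact Hy].
    eapply eval_pair; [lookup .. | exact Hp].
  - intros [|i] u H; discriminate.
Qed.

Definition is_bind (m k v : A) : Prop :=
  (forall z q y, ap Q m z y -> pairv Q (pF Q) q y -> ap Q v z y) /\
  (forall z c z' p y m2 y2, ap Q m z y -> pairv Q c z' p -> pairv Q (pT Q) p y ->
     ap Q k c m2 -> ap Q m2 z' y2 -> ap Q v z y2).

Lemma bind_exists : exists BIND, forall m k, exists v, ap2 BIND m k v /\ is_bind m k v.
Proof.
  destruct (abstraction_exists Q 2 (tlet Q 3 (Ap (V 0) (V 2))
    (tif Q (p0T Q (V 3)) (Ap (Ap (V 1) (hdT Q (V 3))) (tlT Q (V 3))) (V 3)))) as [BIND HBIND].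
  exists BIND. intros m k. destruct (HBIND m) as [w [Hw Hw']]. destruct (Hw' k) as [v [Hv Hv']].
  exists v. split; [exists w; auto | split].
  - intros z q y Hy Hq. apply Hv'. apply (eval_let Q [m; k; z]) with (a := y).
    + econstructor; [apply eval_var | apply eval_var | ]; reflexivity || exact Hy.
    + apply eval_if_false; [|lookup].
      eapply eval_p0; [lookup | exact Hq].
  - intros z c z' p y m2 y2 Hy Hp Hpy Hk Hm2. apply Hv'.
    apply (eval_let Q [m; k; z]) with (a := y).
    + econstructor; [apply eval_var | apply eval_var | ]; reflexivity || exact Hy.
    + apply eval_if_true; [eapply eval_p0; [lookup | exact Hpy]|].
      econstructor; [econstructor; [lookup | | exact Hk] | | exact Hm2].
      * eapply eval_hd; [lookup | exact Hp | exact Hpy].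
      * eapply eval_tl; [lookup | exact Hp | exact Hpy].
Qed.

Lemma runs_bind m k v L1 c1 m2 L2 c2 : is_bind m k v ->
  runs m L1 c1 -> ap Q k c1 m2 -> runs m2 L2 c2 -> runs v (L1 ++ L2) c2.
Proof.
  intros [Hquery Hreturn] [H1ret H1ask] Hk [H2ret H2ask]. split.
  - intros s z Hz. rewrite <- app_assoc in Hz.
    destruct (H1ret _ _ Hz) as (z1 & p1 & y1 & Hz1 & Hp1 & Hy1 & Hm).
    destruct (H2ret _ _ Hz1) as (z2 & p2 & y2 & Hz2 & Hp2 & Hy2 & Hm2).
    exists z2, p2, y2. repeat split; eauto.
  - intros i u Hi. rewrite firstn_app. destruct (Nat.lt_ge_cases i (length L1)) as [Hl|Hl].
    + rewrite nth_error_app1 in Hi by exact Hl.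
      destruct (H1ask _ _ Hi) as (q & z & y & Hz & Hq & Hm & Hf).
      replace (i - length L1) with 0 by lia. rewrite app_nil_r.
      exists q, z, y. repeat split; eauto.
    + rewrite nth_error_app2 in Hi by exact Hl.
      destruct (H2ask _ _ Hi) as (q & z1 & y & Hz1 & Hq & Hm2 & Hf).
      destruct (is_code_total Q (L1 ++ firstn (i - length L1) L2)) as [z Hz].
      destruct (H1ret _ _ Hz) as (z1' & p1 & y1 & Hz1' & Hp1 & Hy1 & Hm).
      rewrite (is_code_fun Q _ _ _ Hz1' Hz1) in Hp1.
      rewrite firstn_all2 by exact Hl.
      exists q, z, y. repeat split; eauto.
Qed.

Lemma ask_exists : exists ASK, forall v u, f v = Some u -> exists m, ap Q ASK v m /\ runs m [u] u.
Proof.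
  destruct (abstraction_exists Q 1 (tif Q (p0T Q (V 1)) (pairT Q (C (pF Q)) (V 0))
    (pairT Q (C (pT Q)) (pairT Q (hdT Q (V 1)) (tlT Q (V 1)))))) as [ASK HASK].
  exists ASK. intros v u Hf. destruct (HASK v) as [m [Hm Hm']]. exists m. split; [exact Hm|]. split.
  - intros s z Hz. cbn in Hz. pose proof Hz as (z0 & w0 & Hz0 & Hw0 & Hzw)%is_code_cons_inv.
    destruct (pairv_total Q (pT Q) w0) as [y Hy]. exists z0, w0, y. repeat split; auto.
    apply Hm'. apply eval_if_false; [eapply eval_iscons; [lookup | exact Hz]|].
    eapply eval_pair; [constructor | | exact Hy].
    eapply eval_pair; [ | | exact Hw0].
    + eapply eval_hd; [lookup | exact Hw0 | exact Hzw].
    + eapply eval_tl; [lookup | exact Hw0 | exact Hzw].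
  - intros [|[|i]] u' Hi; try discriminate. injection Hi as <-.
    destruct (is_code_total Q []) as [z Hz]. destruct (pairv_total Q (pF Q) v) as [y Hy].
    exists v, z, y. repeat split; auto. apply Hm'.
    apply eval_if_true; [eapply eval_isnil; [lookup | exact Hz]|].
    eapply eval_pair; [constructor | lookup | exact Hy].
Qed.

End OracleComputations.

Lemma firstn_succ_nth {X} (l : list X) j d :
  j < length l -> firstn (S j) l = firstn j l ++ [nth j l d].
Proof.
  revert j. induction l as [|x l IH]; intros [|j] Hj; cbn in *; try lia; [reflexivity|].
  f_equal. apply IH. lia.
Qed.

Section ComputableApplication.
Context {A : Type} (Q : pca_str A) (f : A -> option A).

Definition ap_computable (R : A -> A -> A -> Prop) : Prop :=
  exists F, forall a x c, R a x c -> exists m, ap2 Q F a x m /\ yields Q f m c.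

Definition fun_computable (h : A -> option A) : Prop :=
  exists H, forall v u, h v = Some u -> exists m, ap Q H v m /\ yields Q f m u.

Lemma yields_bind m k v c1 m2 c2 : is_bind Q m k v ->
  yields Q f m c1 -> ap Q k c1 m2 -> yields Q f m2 c2 -> yields Q f v c2.
Proof. intros Hb [L1 H1] Hk [L2 H2]. exists (L1 ++ L2). eapply runs_bind; eassumption. Qed.

Section MonadicTerms.
Context (BIND : A) (HBIND : forall m k, exists v, ap2 Q BIND m k v /\ is_bind Q m k v).

Definition bindT (t k : tm A) : tm A := Ap (Ap (C BIND) t) k.

Definition denotes (r : nat -> A) (t : tm A) (c : A) : Prop :=
  exists m, eval Q r t m /\ yields Q f m c.

Lemma denotes_bind r t tk c1 k m2 c2 : denotes r t c1 -> eval Q r tk k -> ap Q k c1 m2 ->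
  yields Q f m2 c2 -> denotes r (bindT t tk) c2.
Proof.
  intros [m [Hm Hc1]] Hk Hkc Hc2. destruct (HBIND m k) as [v [[w [Hw Hv]] Hb]].
  exists v. split; [|eapply yields_bind; eassumption].
  econstructor; [econstructor; [constructor | exact Hm | exact Hw] | exact Hk | exact Hv].
Qed.

Lemma denotes_bind_lam l t body c1 c2 : denotes (env Q l) t c1 ->
  denotes (env Q (l ++ [c1])) body c2 -> denotes (env Q l) (bindT t (lam Q (length l) body)) c2.
Proof.
  intros Ht [m2 [Hm2 Hc2]]. destruct (eval_lam_env Q _ _ _ _ Hm2) as [k [Hk Hkc]].
  eapply denotes_bind; eassumption.
Qed.

Lemma denotes_if_true r b t1 t2 c :
  eval Q r b (pT Q) -> denotes r t1 c -> denotes r (tif Q b t1 t2) c.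
Proof. intros Hb [m [Hm Hc]]. exists m. split; [apply eval_if_true|]; assumption. Qed.

Lemma denotes_if_false r b t1 t2 c :
  eval Q r b (pF Q) -> denotes r t2 c -> denotes r (tif Q b t1 t2) c.
Proof. intros Hb [m [Hm Hc]]. exists m. split; [apply eval_if_false|]; assumption. Qed.

Section Relativization.
Context (B : pca_str A) (h : A -> option A) (APB H : A)
  (HAPB : forall a x c, ap B a x c -> exists m, ap2 Q APB a x m /\ yields Q f m c)
  (HH : forall v u, h v = Some u -> exists m, ap Q H v m /\ yields Q f m u).

Definition apT (t u : tm A) : tm A := Ap (Ap (C APB) t) u.

Lemma denotes_apT r t u a x c : eval Q r t a -> eval Q r u x -> ap B a x c -> denotes r (apT t u) c.
Proof.
  intros Ht Hu Hc. destruct (HAPB _ _ _ Hc) as [m [[w [Hw Hm]] Hmc]]. exists m. split; [|exact Hmc].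
  econstructor; [econstructor; [constructor | exact Ht | exact Hw] | exact Hu | exact Hm].
Qed.

Lemma nil_code_computation : exists NIL z, is_code B [] z /\ yields Q f NIL z.
Proof.
  destruct (pairv_total B (pT B) (pT B)) as [z [q [Hq Hz]]].
  assert (Hnil : denotes (env Q [])
    (bindT (apT (C (pp B)) (C (pT B))) (lam Q 0 (apT (V 0) (C (pT B))))) z).
  { apply denotes_bind_lam with (c1 := q); [eapply denotes_apT; [constructor .. | exact Hq]|].
    eapply denotes_apT; [lookup | constructor | exact Hz]. }
  destruct Hnil as [NIL [_ HNIL]]. exists NIL, z. split; [constructor; exists q; auto | exact HNIL].
Qed.

Definition prepends (k : A) (l : list A) : Prop :=
  forall s z, is_code B s z -> exists m Z, ap Q k z m /\ yields Q f m Z /\ is_code B (l ++ s) Z.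

Definition consBody : tm A :=
  bindT (apT (C (pp B)) (V 0)) (lam Q 2 (bindT (apT (V 2) (V 1))
    (lam Q 3 (bindT (apT (C (pp B)) (C (pF B))) (lam Q 4 (apT (V 4) (V 3))))))).

Lemma cons_code_computation : exists CONS, forall u, exists w, ap Q CONS u w /\ prepends w [u].
Proof.
  destruct (abstraction_exists Q 1 consBody) as [CONS HCONS].
  exists CONS. intros u. destruct (HCONS u) as [w [Hw Hw']]. exists w. split; [exact Hw|].
  intros s z Hs. destruct (pairv_total B u z) as [p [q1 [Hq1 Hp]]].
  destruct (pairv_total B (pF B) p) as [Z [q2 [Hq2 HZ]]].
  assert (Hcons : denotes (env Q [u; z]) consBody Z).
  { unfold consBody.
    eapply denotes_bind_lam;
      [eapply denotes_apT; [constructor | lookup | exact Hq1]|].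
    eapply denotes_bind_lam; [eapply denotes_apT; [lookup .. | exact Hp]|].
    eapply denotes_bind_lam; [eapply denotes_apT; [constructor .. | exact Hq2]|].
    eapply denotes_apT; [lookup .. | exact HZ]. }
  destruct Hcons as [m [Hm HmZ]]. exists m, Z. repeat split; [now apply Hw' | exact HmZ |].
  apply (code_cons _ u s z p Z Hs); [exists q1 | exists q2]; auto.
Qed.

Section Loop.
Context (NIL nilz CONS : A) (HNIL : is_code B [] nilz /\ yields Q f NIL nilz)
  (HCONS : forall u, exists w, ap Q CONS u w /\ prepends w [u]).

(* With [LOOP], [a], [k] bound to variables 0, 1, 2: run the continuation [k] on the empty
   code to get the code [X] of the dialogue so far, compute [W = a · X] in [B], turn the
   B-Boolean [p0 W] into a Q-Boolean (variables 6 to 8), and either return [p1 W] when [W]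
   is [p ⊤ c], or answer the query [W = p ⊥ v] by [h v = u] and recurse with the
   continuation that first prepends [u]. *)
Definition loopBranch : tm A :=
  tif Q (V 8) (apT (C (pp1 B)) (V 5))
    (bindT (apT (C (pp1 B)) (V 5)) (lam Q 9 (bindT (Ap (C H) (V 9)) (lam Q 10
      (Ap (Ap (V 0) (V 1)) (lam Q 11 (bindT (Ap (Ap (C CONS) (V 10)) (V 11)) (V 2)))))))).

Definition loopBody : tm A :=
  bindT (C NIL) (lam Q 3 (bindT (Ap (V 2) (V 3)) (lam Q 4 (bindT (apT (V 1) (V 4)) (lam Q 5
    (bindT (apT (C (pp0 B)) (V 5)) (lam Q 6 (bindT (apT (V 6) (C (pT Q))) (lam Q 7
      (bindT (apT (V 7) (C (pF Q))) (lam Q 8 loopBranch))))))))))).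

Context (LOOP : A) (HLOOP : abstracts Q 1 LOOP [LOOP] loopBody).

Definition loop_yields (a k c : A) : Prop := exists m, ap2 Q LOOP a k m /\ yields Q f m c.

Lemma loop_step a k l X W tag y t bQ c : prepends k l -> is_code B l X -> ap B a X W ->
  pairv B tag y W -> ap B tag (pT Q) t -> ap B t (pF Q) bQ ->
  denotes (env Q [LOOP; a; k; nilz; X; W; tag; t; bQ]) loopBranch c -> loop_yields a k c.
Proof.
  intros Hk HX HW HWy Ht HbQ Hbranch. destruct HNIL as [Hnilz HNILz].
  destruct (Hk _ _ Hnilz) as (m0 & X' & Hm0 & HX' & HX'l).
  rewrite app_nil_r in HX'l. rewrite (is_code_fun B _ _ _ HX'l HX) in HX'.
  destruct (HLOOP a) as [w [Hw Hw']].
  enough (Hbody : denotes (env Q [LOOP; a; k]) loopBody c).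
  { destruct Hbody as [m [Hm Hmc]]. exists m. split; [exists w; split; [|apply Hw']|]; assumption. }
  unfold loopBody.
  eapply denotes_bind_lam; [exists NIL; split; [constructor | exact HNILz]|].
  eapply denotes_bind_lam.
  { exists m0. split; [|exact HX']. econstructor; [apply eval_var .. |]; reflexivity || exact Hm0. }
  eapply denotes_bind_lam; [eapply denotes_apT; [lookup .. | exact HW]|].
  eapply denotes_bind_lam;
    [eapply denotes_apT; [constructor | lookup | exact (pairv_p0 B _ _ _ HWy)]|].
  eapply denotes_bind_lam; [eapply denotes_apT; [lookup | constructor | exact Ht]|].
  eapply denotes_bind_lam; [eapply denotes_apT; [lookup | constructor | exact HbQ]|].
  exact Hbranch.
Qed.

Lemma loop_return a k l X W c : prepends k l -> is_code B l X -> ap B a X W ->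
  pairv B (pT B) c W -> loop_yields a k c.
Proof.
  intros Hk HX HW Hc. destruct (T_ax _ B (pT Q) (pF Q)) as [t [Ht HtF]].
  eapply loop_step; try eassumption.
  apply denotes_if_true; [lookup|].
  eapply denotes_apT; [constructor | lookup | exact (pairv_p1 B _ _ _ Hc)].
Qed.

Lemma loop_query a k l X W v u c : prepends k l -> is_code B l X -> ap B a X W ->
  pairv B (pF B) v W -> h v = Some u ->
  (forall k', prepends k' (l ++ [u]) -> loop_yields a k' c) -> loop_yields a k c.
Proof.
  intros Hk HX HW Hv Hu IH. destruct (F_ax _ B (pT Q) (pF Q)) as [t [Ht HtF]].
  eapply loop_step; try eassumption.
  apply denotes_if_false; [lookup|].
  eapply denotes_bind_lam;
    [eapply denotes_apT; [constructor | lookup | exact (pairv_p1 B _ _ _ Hv)]|].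
  eapply denotes_bind_lam.
  { destruct (HH _ _ Hu) as [mu [Hmu Hmuy]]. exists mu. split; [|exact Hmuy].
    econstructor; [constructor | lookup | exact Hmu]. }
  set (r := env Q [LOOP; a; k; nilz; X; W; pF B; t; pF Q; v; u]).
  destruct (eval_lam Q r 11 (bindT (Ap (Ap (C CONS) (V 10)) (V 11)) (V 2))) as [k' [Hk'ev Hk']].
  assert (Hpre : prepends k' (l ++ [u])).
  { intros s z Hs. destruct (HCONS u) as [wu [Hwu Hpu]].
    destruct (Hpu _ _ Hs) as (mc & Zc & Hmc & HZc & HZcs).
    destruct (Hk _ _ HZcs) as (m2 & Z2 & Hm2 & HZ2 & HZ2s).
    destruct (HBIND mc k) as [vb [[wb [Hwb Hvb]] Hbind]].
    exists vb, Z2. split; [|split; [eapply yields_bind; eassumption | now rewrite <- app_assoc]].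
    apply Hk'. econstructor; [econstructor; [constructor | | exact Hwb] | lookup | exact Hvb].
    econstructor; [econstructor; [constructor | lookup | exact Hwu]
                  | lookup | exact Hmc]. }
  destruct (IH k' Hpre) as [m' [[w' [Hw' Hm']] Hm'c]]. exists m'. split; [|exact Hm'c].
  econstructor; [econstructor; [lookup .. | exact Hw'] | exact Hk'ev | exact Hm'].
Qed.

Lemma loop_correct a x us c : dialogue B h a x us ->
  (exists X W, is_code B (x :: us) X /\ pairv B (pT B) c W /\ ap B a X W) ->
  forall j k, j <= length us -> prepends k (x :: firstn j us) -> loop_yields a k c.
Proof.
  intros Hd (X & W & HX & HW & HaX) j k Hj. remember (length us - j) as n eqn:Hn.
  revert j k Hj Hn. induction n as [|n IH]; intros j k Hj Hn Hk.
  - replace j with (length us) in Hk by lia. rewrite firstn_all in Hk.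
    eapply loop_return; eassumption.
  - destruct (Hd j ltac:(lia)) as (v & Xj & Wj & HXj & HWj & HaXj & Hv).
    eapply loop_query; try eassumption.
    intros k' Hk'. apply (IH (S j)); [lia | lia |].
    rewrite (firstn_succ_nth us j x) by lia. exact Hk'.
Qed.

End Loop.

Lemma rel_ap_computable : ap_computable (rel_ap B h).
Proof.
  destruct nil_code_computation as (NIL & nilz & HNIL).
  destruct cons_code_computation as [CONS HCONS].
  destruct (fixpoint_exists Q (loopBody NIL CONS)) as [LOOP HLOOP].
  destruct (abstraction_exists Q 1 (Ap (Ap (C LOOP) (V 0)) (Ap (C CONS) (V 1)))) as [F HF].
  exists F. intros a x c [us [Hd Hfin]].
  destruct (HCONS x) as [wx [Hwx Hpx]].
  destruct (loop_correct NIL nilz CONS HNIL HCONS LOOP HLOOP a x us c Hd Hfin 0 wx ltac:(lia) Hpx)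
    as [m [[w [Hw Hm]] Hmc]].
  destruct (HF a) as [wa [Hwa Hwa']]. exists m. split; [exists wa; split; [exact Hwa|]|exact Hmc].
  apply Hwa'. econstructor; [econstructor; [constructor | lookup | exact Hw] | | exact Hm].
  econstructor; [constructor | lookup | exact Hwx].
Qed.

End Relativization.
End MonadicTerms.
End ComputableApplication.

Lemma rel_ap_intro {A} (P : pca_str A) h a b c X W :
  is_code P [b] X -> pairv P (pT P) c W -> ap P a X W -> rel_ap P h a b c.
Proof. intros HX HW Ha. exists []. split; [intros i Hi; cbn in Hi; lia | eauto]. Qed.

Section ComputableToApplicative.
Context {A : Type} (Q : pca_str A) (f : A -> option A).

Lemma ap_computable_ext (R R' : A -> A -> A -> Prop) :
  (forall a x c, R' a x c -> R a x c) -> ap_computable Q f R -> ap_computable Q f R'.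
Proof. intros HR [F HF]. exists F. eauto. Qed.

Lemma ap_computable_rel B h : ap_computable Q f (ap B) -> fun_computable Q f h ->
  ap_computable Q f (rel_ap B h).
Proof.
  intros [APB HAPB] [H HH]. destruct (bind_exists Q) as [BIND HBIND].
  exact (rel_ap_computable Q f BIND HBIND B h APB H HAPB HH).
Qed.

Lemma fun_computable_oracle : fun_computable Q f f.
Proof.
  destruct (ask_exists Q f) as [ASK HASK]. exists ASK. intros v u Hu.
  destruct (HASK v u Hu) as [m [Hm Hmu]]. exists m. split; [exact Hm | exists [u]; exact Hmu].
Qed.

Lemma fun_computable_of_realized h G : (forall v u, h v = Some u -> ap Q G v u) ->
  fun_computable Q f h.
Proof.
  intros HG. destruct (ret_exists Q f) as [RET HRET].
  destruct (abstraction_exists Q 0 (Ap (C RET) (Ap (C G) (V 0)))) as [H HH].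
  exists H. intros v u Hu. destruct (HRET u) as [m [Hm Hmu]]. exists m.
  split; [|exists []; exact Hmu]. apply HH.
  econstructor; [constructor | | exact Hm].
  econstructor; [constructor | lookup | exact (HG _ _ Hu)].
Qed.

Lemma ap_computable_of_realized (R : A -> A -> A -> Prop) e :
  (forall a b c, R a b c -> ap2 Q e a b c) -> ap_computable Q f R.
Proof.
  intros He. destruct (ret_exists Q f) as [RET HRET].
  destruct (abstraction_exists Q 1 (Ap (C RET) (Ap (Ap (C e) (V 0)) (V 1)))) as [F HF].
  exists F. intros a b c Hc. destruct (HRET c) as [m [Hm Hmc]]. exists m.
  split; [|exists []; exact Hmc]. destruct (HF a) as [w [Hw Hw']]. exists w. split; [exact Hw|].
  apply Hw'. destruct (He _ _ _ Hc) as [e1 [He1 He1c]].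
  econstructor; [constructor | | exact Hm].
  econstructor; [econstructor; [constructor | lookup | exact He1] | lookup | exact He1c].
Qed.

Section Runner.
Context (F : A) (a w1 : A).

(* [w1 = λX. F a (hd X) (tl X)], which turns the f-computation [F a b] into an element of
   [Q[f]] whose f-dialogues with [b] are exactly those of the computation. *)
Definition runBody : tm A :=
  tlet Q 2 (Ap (Ap (Ap (C F) (V 0)) (hdT Q (V 1))) (tlT Q (V 1)))
    (tif Q (p0T Q (V 2)) (pairT Q (C (pT Q)) (hdT Q (V 2))) (V 2)).

Context (Hw1 : forall X y, ap Q w1 X y <-> eval Q (env Q [a; X]) runBody y).

Lemma rel_ap_of_runs b m L c : ap2 Q F a b m -> runs Q f m L c -> rel_ap Q f w1 b c.
Proof.
  intros [w [Hw Hm]] [Hret Hask]. exists L. split.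
  - intros i Hi. destruct (Hask i (nth i L b)) as (v & z & y & Hz & Hv & Hy & Hf).
    { now apply nth_error_nth'. }
    destruct (is_code_total Q (b :: firstn i L)) as [X HX].
    pose proof HX as (z' & p & Hz' & Hp & HXp)%is_code_cons_inv.
    rewrite (is_code_fun Q _ _ _ Hz' Hz) in Hp.
    exists v, X, y. repeat split; [exact HX | exact Hv | | exact Hf].
    apply Hw1. apply (eval_let Q [a; X]) with (a := y).
    + econstructor; [econstructor; [econstructor; [constructor | lookup | exact Hw] | |] | |].
      * eapply eval_hd; [lookup | exact Hp | exact HXp].
      * exact Hm.
      * eapply eval_tl; [lookup | exact Hp | exact HXp].
      * exact Hy.
    + apply eval_if_false; [eapply eval_p0; [lookup | exact Hv]|].
      apply eval_var. reflexivity.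
  - destruct (is_code_total Q (b :: L)) as [X HX].
    pose proof HX as (z & p & Hz & Hp & HXp)%is_code_cons_inv.
    rewrite <- (app_nil_r L) in Hz.
    destruct (Hret _ _ Hz) as (z' & q & y & _ & Hq & Hy & Hzy).
    destruct (pairv_total Q (pT Q) c) as [W HW].
    exists X, W. repeat split; [exact HX | exact HW |].
    apply Hw1. apply (eval_let Q [a; X]) with (a := y).
    + econstructor; [econstructor; [econstructor; [constructor | lookup | exact Hw] | |] | |].
      * eapply eval_hd; [lookup | exact Hp | exact HXp].
      * exact Hm.
      * eapply eval_tl; [lookup | exact Hp | exact HXp].
      * exact Hzy.
    + apply eval_if_true; [eapply eval_p0; [lookup | exact Hy]|].
      eapply eval_pair; [constructor | | exact HW].
      eapply eval_hd; [lookup | exact Hq | exact Hy].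
Qed.

End Runner.

Lemma applicative_of_ap_computable (R : A -> A -> A -> Prop) :
  ap_computable Q f R -> applicative R (rel_ap Q f) (@eq A).
Proof.
  intros [F HF]. destruct (abstraction_exists Q 1 (runBody F)) as [RUN HRUN].
  destruct (abstraction_exists Q 0 (pairT Q (C (pT Q)) (Ap (C RUN) (hdT Q (V 0))))) as [R0 HR0].
  split; [eauto|]. exists R0. intros a b c ? ? Hc <- <-.
  destruct (HRUN a) as [w1 [Hw1 Hw1']].
  destruct (HF _ _ _ Hc) as [m [Hm [L HL]]].
  destruct (is_code_total Q [a]) as [X HX]. destruct (pairv_total Q (pT Q) w1) as [W HW].
  exists w1, c. repeat split; [| exact (rel_ap_of_runs F a w1 Hw1' b m L c Hm HL)].
  apply (rel_ap_intro _ _ _ _ _ X W HX HW). apply HR0.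
  eapply eval_pair; [constructor | | exact HW].
  econstructor; [constructor | eapply eval_code_hd; [lookup | exact HX] | exact Hw1].
Qed.

End ComputableToApplicative.

Section RelativePca.
Context {A : Type} (P : pca_str A) (g : A -> option A) (Pg : pca_str A)
  (HPg : forall a b c, ap Pg a b c <-> rel_ap P g a b c).

Lemma rel_pca_embeds : exists e, forall a b c, ap P a b c -> ap2 Pg e a b c.
Proof.
  set (body := pairT P (C (pT P)) (Ap (hdT P (V 0)) (hdT P (V 1)))).
  destruct (abstraction_exists P 0 (pairT P (C (pT P)) (lam P 1 body))) as [E HE].
  exists E. intros a b c Hc.
  destruct (is_code_total P [a]) as [X HX].
  destruct (eval_lam P (env P [X]) 1 body) as [e1 [He1 He1']].
  destruct (pairv_total P (pT P) e1) as [W HW].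
  exists e1. split; apply HPg.
  - apply (rel_ap_intro _ _ _ _ _ X W HX HW). apply HE.
    eapply eval_pair; [constructor | exact He1 | exact HW].
  - destruct (is_code_total P [b]) as [Y HY]. destruct (pairv_total P (pT P) c) as [W' HW'].
    apply (rel_ap_intro _ _ _ _ _ Y W' HY HW'). apply He1'.
    eapply eval_pair; [constructor | | exact HW'].
    econstructor; [| | exact Hc]; eapply eval_code_hd; try eassumption; lookup.
Qed.

Lemma rel_pca_realizes_oracle : exists G, forall v u, g v = Some u -> ap Pg G v u.
Proof.
  destruct (abstraction_exists P 0 (tif P (p0T P (tlT P (V 0)))
    (pairT P (C (pF P)) (hdT P (V 0))) (pairT P (C (pT P)) (hdT P (tlT P (V 0)))))) as [G HG].
  exists G. intros v u Hu. apply HPg. exists [u]. split.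
  - intros [|i] Hi; cbn in Hi; [|lia].
    destruct (is_code_total P [v]) as [X HX]. destruct (pairv_total P (pF P) v) as [W HW].
    exists v, X, W. repeat split; [exact HX | exact HW | | exact Hu]. apply HG.
    destruct (eval_code_tl P (env P [X]) (V 0) X v [] (eval_V _ _ _) HX) as [z [Hz Hzev]].
    apply eval_if_true; [exact (eval_isnil P _ _ _ Hzev Hz)|].
    eapply eval_pair; [constructor | | exact HW].
    eapply eval_code_hd; [lookup | exact HX].
  - destruct (is_code_total P [v; u]) as [X HX]. destruct (pairv_total P (pT P) u) as [W HW].
    exists X, W. repeat split; [exact HX | exact HW |]. apply HG.
    destruct (eval_code_tl P (env P [X]) (V 0) X v [u] (eval_V _ _ _) HX) as [z [Hz Hzev]].
    apply eval_if_false; [exact (eval_iscons P _ _ _ _ _ Hzev Hz)|].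
    eapply eval_pair; [constructor | | exact HW].
    eapply eval_code_hd; [exact Hzev | exact Hz].
Qed.

End RelativePca.

Lemma rel_swap_applicative {A} (P : pca_str A) (f g : A -> option A) (Pf Pg : pca_str A)
    (HPf : forall a b c, ap Pf a b c <-> rel_ap P f a b c)
    (HPg : forall a b c, ap Pg a b c <-> rel_ap P g a b c) :
  applicative (rel_ap Pf g) (rel_ap Pg f) (@eq A).
Proof.
  destruct (rel_pca_embeds P g Pg HPg) as [e He].
  destruct (rel_pca_realizes_oracle P g Pg HPg) as [G HG].
  apply applicative_of_ap_computable, ap_computable_rel;
    [|exact (fun_computable_of_realized Pg f g G HG)].
  apply (ap_computable_ext _ _ (rel_ap P f)); [intros; now apply HPf|].
  apply ap_computable_rel; [exact (ap_computable_of_realized Pg f (ap P) e He)|].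
  apply fun_computable_oracle.
Qed.

Lemma pca_iso_of_identity {A} (apA apB : appl A) :
  applicative apA apB (@eq A) -> applicative apB apA (@eq A) -> pca_iso apA apB.
Proof.
  intros HAB HBA. exists (@eq A), (@eq A).
  split; [exact HAB | split; [exact HBA | split]];
    intros a x; (split; [intros [b [-> ->]]; reflexivity | intros ->; eauto]).
Qed.

Theorem mainTheorem4 (A : Type) (P : pca_str A) (f g : A -> option A)
    (Pf Pg : pca_str A)
    (HPf : forall a b c, ap Pf a b c <-> rel_ap P f a b c)
    (HPg : forall a b c, ap Pg a b c <-> rel_ap P g a b c) :
  pca_iso (rel_ap Pf g) (rel_ap Pg f).
Proof.
  apply pca_iso_of_identity.
  - exact (rel_swap_applicative P f g Pf Pg HPf HPg).
  - exact (rel_swap_applicative P g f Pg Pf HPg HPf).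
Qed.
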